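(* Let $\mathbb{E}$ be a finitely complete category, $\Sigma$ a fibrational class of split epimorphisms, and suppose $\mathbb{E}$ is a $\Sigma$-Mal'tsev category. Let $R$ be a reflexive relation and $S$ a $\Sigma$-relation on an object $X$ such that $[R,S]=0$. If $R'$ is a reflexive relation on $X$ with $R'\subseteq R$, then $[R',S]=0$.
   Context: A split epimorphism is a pair $(f,s)$ with $fs=1$. A class $\Sigma$ of split epimorphisms is fibrational if it contains all split epimorphisms $(f,s)$ with $f$ invertible and is stable under pullback along any morphism. A pair of morphisms with common codomain $Z$ is jointly extremally epic if it factors jointly through no non-invertible monomorphism into $Z$. $\mathbb{E}$ is $\Sigma$-Mal'tsev if for every split epimorphism $(f,s)\colon X\rightleftarrows Y$ in $\Sigma$ and every split epimorphism $(g,t)$ with $g\colon Y'\to Y$, letting $X'=Y'\times_YX$, $s'=(1_{Y'},sg)$, $\bar t=(tf,1_X)$, the pair $(s',\bar t)$ is jointly extremally epic. A $\Sigma$-relation is a reflexive relation $(d_0,d_1)\colon S\rightarrowtail X\times X$ with reflexivity $s_0$ such that $(d_0,s_0)\in\Sigma$. For reflexive relations $R,S$ on $X$, $R\times_XS$ is the pullback of $d_0^S$ along $d_1^R$ (elements $xRySz$), $\sigma_0^R\colon R\to R\times_XS$, $xRy\mapsto xRySy$, and $\sigma_0^S\colon S\to R\times_XS$, $ySz\mapsto yRySz$. $[R,S]=0$ means there is a morphism $p\colon R\times_XS\to X$ with $p\sigma_0^R=d_0^R$ and $p\sigma_0^S=d_1^S$. *)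

Set Implicit Arguments.
Unset Strict Implicit.

Record Category := {
  Ob :> Type;
  Hom : Ob -> Ob -> Type;
  idm : forall a, Hom a a;
  comp : forall a b c, Hom b c -> Hom a b -> Hom a c;
  comp_assoc : forall a b c d (h : Hom c d) (g : Hom b c) (f : Hom a b),
      comp h (comp g f) = comp (comp h g) f;
  comp_id_l : forall a b (f : Hom a b), comp (idm b) f = f;
  comp_id_r : forall a b (f : Hom a b), comp f (idm a) = f
}.

Arguments Hom {C} a b : rename.
Arguments idm {C} a : rename.
Arguments comp {C a b c} g f : rename.
Notation "g \o f" := (comp g f) (at level 40, left associativity).

Section Basic.
Variable C : Category.

Definition is_mono {a b : C} (m : Hom a b) : Prop :=
  forall z (u v : Hom z a), m \o u = m \o v -> u = v.

Definition is_iso {a b : C} (f : Hom a b) : Prop :=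
  exists g : Hom b a, g \o f = idm a /\ f \o g = idm b.

Definition is_terminal (t : C) : Prop :=
  forall a : C, exists u : Hom a t, forall v : Hom a t, v = u.

Definition is_pullback {A B Z P : C} (f : Hom A Z) (g : Hom B Z)
  (p1 : Hom P A) (p2 : Hom P B) : Prop :=
  f \o p1 = g \o p2 /\
  forall Q (q1 : Hom Q A) (q2 : Hom Q B), f \o q1 = g \o q2 ->
    exists u : Hom Q P, (p1 \o u = q1 /\ p2 \o u = q2) /\
      forall v : Hom Q P, p1 \o v = q1 -> p2 \o v = q2 -> v = u.

Definition finitely_complete : Prop :=
  (exists t : C, is_terminal t) /\
  forall A B Z (f : Hom A Z) (g : Hom B Z),
    exists P (p1 : Hom P A) (p2 : Hom P B), is_pullback f g p1 p2.

Definition split_epi_class := forall X Y : C, Hom X Y -> Hom Y X -> Prop.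

Definition is_split_epi {X Y : C} (f : Hom X Y) (s : Hom Y X) : Prop :=
  f \o s = idm Y.

Definition fibrational (Sig : split_epi_class) : Prop :=
  (forall X Y (f : Hom X Y) (s : Hom Y X), Sig X Y f s -> is_split_epi f s) /\
  (forall X Y (f : Hom X Y) (s : Hom Y X),
      is_split_epi f s -> is_iso f -> Sig X Y f s) /\
  (forall X Y (f : Hom X Y) (s : Hom Y X), Sig X Y f s ->
     forall Y' (g : Hom Y' Y) X' (f' : Hom X' Y') (g' : Hom X' X),
       is_pullback g f f' g' ->
       forall s' : Hom Y' X', f' \o s' = idm Y' -> g' \o s' = s \o g ->
       Sig X' Y' f' s').

Definition jointly_extremally_epic {A B Z : C} (a : Hom A Z) (b : Hom B Z) : Prop :=
  forall M (m : Hom M Z) (a' : Hom A M) (b' : Hom B M),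
    is_mono m -> m \o a' = a -> m \o b' = b -> is_iso m.

Definition sigma_maltsev (Sig : split_epi_class) : Prop :=
  forall X Y (f : Hom X Y) (s : Hom Y X), Sig X Y f s ->
  forall Y' (g : Hom Y' Y) (t : Hom Y Y'), is_split_epi g t ->
  forall X' (f' : Hom X' Y') (g' : Hom X' X), is_pullback g f f' g' ->
  forall (s' : Hom Y' X') (tb : Hom X X'),
    f' \o s' = idm Y' -> g' \o s' = s \o g ->
    f' \o tb = t \o f -> g' \o tb = idm X ->
    jointly_extremally_epic s' tb.

(** Relations on X, presented as jointly monic spans (d0,d1) : S -> X,
    i.e. (d0,d1) : S >-> X x X is a monomorphism. *)
Record refl_rel (X : C) := {
  rel_ob : C;
  d0 : Hom rel_ob X;
  d1 : Hom rel_ob X;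
  s0 : Hom X rel_ob;
  rel_jmono : forall Z (u v : Hom Z rel_ob),
      d0 \o u = d0 \o v -> d1 \o u = d1 \o v -> u = v;
  rel_refl0 : d0 \o s0 = idm X;
  rel_refl1 : d1 \o s0 = idm X
}.

Definition sigma_relation (Sig : split_epi_class) {X : C} (S : refl_rel X) : Prop :=
  Sig (rel_ob S) X (d0 S) (s0 S).

Definition rel_le {X : C} (R' R : refl_rel X) : Prop :=
  exists i : Hom (rel_ob R') (rel_ob R),
    d0 R \o i = d0 R' /\ d1 R \o i = d1 R'.

(** [R,S] = 0: for the pullback R x_X S of d0^S along d1^R (projections
    pR, pS), with sigma0^R : R -> R x_X S (xRy |-> xRySy) and
    sigma0^S : S -> R x_X S (ySz |-> yRySz), there is p : R x_X S -> X
    with p sigma0^R = d0^R and p sigma0^S = d1^S.  (Stated for every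
    pullback; independent of the choice since pullbacks are unique up to
    isomorphism.) *)
Definition centralize {X : C} (R S : refl_rel X) : Prop :=
  forall P (pR : Hom P (rel_ob R)) (pS : Hom P (rel_ob S)),
    is_pullback (d1 R) (d0 S) pR pS ->
    forall (sigR : Hom (rel_ob R) P) (sigS : Hom (rel_ob S) P),
      pR \o sigR = idm (rel_ob R) -> pS \o sigR = s0 S \o d1 R ->
      pR \o sigS = s0 R \o d0 S -> pS \o sigS = idm (rel_ob S) ->
      exists p : Hom P X, p \o sigR = d0 R /\ p \o sigS = d1 S.

End Basic.


(** A pullback of [d1 R]
    and [d0 S] exists since [E] is finitely complete, and the inclusion
    [i : R' -> R] induces [j : R' x_X S -> R x_X S] carrying the sections
    of [R'] and [S] to those of [R] and [S]; precomposing the centralizing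
    map of [R] and [S] with [j] gives one for [R'] and [S]. *)

Section Pullbacks.
Context {C : Category}.

Lemma pullback_lift {A B Z P Q : C} {f : Hom A Z} {g : Hom B Z}
    {p1 : Hom P A} {p2 : Hom P B} (q1 : Hom Q A) (q2 : Hom Q B) :
  is_pullback f g p1 p2 -> f \o q1 = g \o q2 ->
  exists u : Hom Q P, p1 \o u = q1 /\ p2 \o u = q2.
Proof.
  intros [_ Huniv] Hq.
  destruct (Huniv Q q1 q2 Hq) as [u [Hu _]].
  exists u. exact Hu.
Qed.

Lemma pullback_ext {A B Z P Q : C} {f : Hom A Z} {g : Hom B Z}
    {p1 : Hom P A} {p2 : Hom P B} {u v : Hom Q P} :
  is_pullback f g p1 p2 -> p1 \o u = p1 \o v -> p2 \o u = p2 \o v -> u = v.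
Proof.
  intros [Hsq Huniv] H1 H2.
  assert (Hq : f \o (p1 \o u) = g \o (p2 \o u)).
  { rewrite !comp_assoc, Hsq. reflexivity. }
  destruct (Huniv Q (p1 \o u) (p2 \o u) Hq) as [w [_ Hw]].
  rewrite (Hw u), (Hw v); auto.
Qed.

End Pullbacks.

Section Relations.
Context {C : Category} {X : C}.

Lemma rel_incl_s0 {R' R : refl_rel X} {i : Hom (rel_ob R') (rel_ob R)} :
  d0 R \o i = d0 R' -> d1 R \o i = d1 R' -> i \o s0 R' = s0 R.
Proof.
  intros Hi0 Hi1.
  apply (@rel_jmono _ _ R).
  - rewrite comp_assoc, Hi0, !rel_refl0. reflexivity.
  - rewrite comp_assoc, Hi1, !rel_refl1. reflexivity.
Qed.

Lemma pullback_sigma_exists {R S : refl_rel X} {P : C}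
    {pR : Hom P (rel_ob R)} {pS : Hom P (rel_ob S)} :
  is_pullback (d1 R) (d0 S) pR pS ->
  exists (sigR : Hom (rel_ob R) P) (sigS : Hom (rel_ob S) P),
    (pR \o sigR = idm (rel_ob R) /\ pS \o sigR = s0 S \o d1 R) /\
    (pR \o sigS = s0 R \o d0 S /\ pS \o sigS = idm (rel_ob S)).
Proof.
  intros HP.
  destruct (pullback_lift (idm _) (s0 S \o d1 R) HP) as [sigR HsigR].
  { rewrite comp_id_r, comp_assoc, rel_refl0, comp_id_l. reflexivity. }
  destruct (pullback_lift (s0 R \o d0 S) (idm _) HP) as [sigS HsigS].
  { rewrite comp_id_r, comp_assoc, rel_refl1, comp_id_l. reflexivity. }
  exists sigR, sigS. split; assumption.
Qed.

Lemma centralize_incl {R R' S : refl_rel X}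
    {i : Hom (rel_ob R') (rel_ob R)} {P : C}
    {pR : Hom P (rel_ob R)} {pS : Hom P (rel_ob S)} :
  d0 R \o i = d0 R' -> d1 R \o i = d1 R' ->
  is_pullback (d1 R) (d0 S) pR pS ->
  centralize R S -> centralize R' S.
Proof.
  intros Hi0 Hi1 HP HRS P' pR' pS' HP' sigR' sigS' e1 e2 e3 e4.
  destruct (pullback_sigma_exists HP)
    as [sigR [sigS [[f1 f2] [g1 g2]]]].
  destruct (HRS P pR pS HP sigR sigS f1 f2 g1 g2) as [p [Hp0 Hp1]].
  destruct (pullback_lift (i \o pR') pS' HP) as [j [j1 j2]].
  { rewrite comp_assoc, Hi1. apply HP'. }
  assert (J1 : j \o sigR' = sigR \o i).
  { apply (pullback_ext HP).
    - rewrite !comp_assoc, j1, f1, <- comp_assoc, e1, comp_id_r, comp_id_l.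
      reflexivity.
    - rewrite !comp_assoc, j2, e2, f2, <- comp_assoc, Hi1. reflexivity. }
  assert (J2 : j \o sigS' = sigS).
  { apply (pullback_ext HP).
    - rewrite comp_assoc, j1, <- comp_assoc, e3, comp_assoc,
        (rel_incl_s0 Hi0 Hi1), g1.
      reflexivity.
    - rewrite comp_assoc, j2, e4, g2. reflexivity. }
  exists (p \o j). split.
  - rewrite <- comp_assoc, J1, comp_assoc, Hp0, Hi0. reflexivity.
  - rewrite <- comp_assoc, J2, Hp1. reflexivity.
Qed.

End Relations.

Theorem proposition3p9 (E : Category) (Sig : split_epi_class E) :
  finitely_complete E -> fibrational Sig -> sigma_maltsev Sig ->
  forall (X : E) (R S : refl_rel X),
    sigma_relation Sig S -> centralize R S ->
    forall R' : refl_rel X, rel_le R' R -> centralize R' S.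
Proof.
  intros [_ Hpullbacks] _ _ X R S _ HRS R' [i [Hi0 Hi1]].
  destruct (Hpullbacks _ _ _ (d1 R) (d0 S)) as [P [pR [pS HP]]].
  exact (centralize_incl Hi0 Hi1 HP HRS).
Qed.
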